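(* For every (convex) polytope $P\subset\mathbb{R}^d$ with vertex set $V(P)$, we have $f(P)=f(V(P))$.
   Context: For a bounded set $S\subset\mathbb{R}^d$ with the Euclidean distance, its Borsuk number $f(S)$ is the minimum number of parts in a partition of $S$ in which every part has diameter strictly smaller than the diameter of $S$ (with $f(S)=+\infty$ if no such partition exists, e.g. when $S$ is a single point). *)

From HB Require Import structures.
From mathcomp Require Import all_boot all_order all_algebra.
From mathcomp Require Import boolp classical_sets reals.
Set Implicit Arguments. Unset Strict Implicit. Unset Printing Implicit Defensive.
Import Order.TTheory GRing.Theory Num.Theory.
Local Open Scope classical_set_scope.
Local Open Scope ring_scope.

Definition edist (R : realType) (d : nat) (x y : 'rV[R]_d) : R :=
  Num.sqrt (\sum_(i < d) (x ord0 i - y ord0 i) ^+ 2).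

Definition diam (R : realType) (d : nat) (S : set 'rV[R]_d) : R :=
  sup [set edist p.1 p.2 | p in S `*` S].

Definition is_partition (R : realType) (d m : nat) (S : set 'rV[R]_d)
    (A : 'I_m -> set 'rV[R]_d) : Prop :=
  (forall i, A i !=set0) /\
  (forall i j, i != j -> A i `&` A j = set0) /\
  (\bigcup_(i in [set: 'I_m]) A i = S).

Definition borsuk_partitionable (R : realType) (d : nat) (S : set 'rV[R]_d)
    (m : nat) : Prop :=
  exists A : 'I_m -> set 'rV[R]_d,
    is_partition S A /\ forall i, diam (A i) < diam S.

(* Borsuk number f(S): Some (minimal m), or None standing for +infinity. *)
Definition borsuk_number (R : realType) (d : nat) (S : set 'rV[R]_d)
    : option nat :=
  match pselect (exists m, `[< borsuk_partitionable S m >]) with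
  | left h => Some (ex_minn h)
  | right _ => None
  end.

Definition conv_hull (R : realType) (d : nat) (X : seq 'rV[R]_d)
    : set 'rV[R]_d :=
  [set x | exists w : 'I_(size X) -> R,
     (forall i, 0 <= w i) /\ \sum_(i < size X) w i = 1 /\
     x = \sum_(i < size X) w i *: X`_i].

Definition polytope (R : realType) (d : nat) (P : set 'rV[R]_d) : Prop :=
  exists X : seq 'rV[R]_d, X != [::] /\ P = conv_hull X.

Definition vertices (R : realType) (d : nat) (P : set 'rV[R]_d)
    : set 'rV[R]_d :=
  [set x | P x /\ ~ exists y z t, [/\ P y, P z, y != z, 0 < t < 1 &
                                   x = t *: y + (1 - t) *: z]].

From mathcomp Require Import all_boot all_order all_algebra.
From mathcomp Require Import boolp classical_sets reals.
From mathcomp Require Import ring lra.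
Set Implicit Arguments. Unset Strict Implicit. Unset Printing Implicit Defensive.
Import Order.TTheory GRing.Theory Num.Theory.
Local Open Scope classical_set_scope.
Local Open Scope ring_scope.

(* Write P = conv X.  A Borsuk partition of P restricts to one of V(P) because
   diam V(P) = diam P.  Conversely, squared distance is convex:
   |x - y|^2 <= sum_(k,l) w_k u_l |X_k - X_l|^2 for x = sum_k w_k X_k and
   y = sum_l u_l X_l, and a pair (X_k, X_l) attaining the maximum D of
   |X_k - X_l|^2 consists of two vertices.  Given a Borsuk partition of V(P)
   into m blocks, keep each vertex in its block and send every other point of P
   to a block carrying at least a 1/m share of its vertex weight.  Two points of
   one block then give weight at least 1/(4m^2) to the pairs (k,l) with
   |X_k - X_l|^2 < D (pairs inside a block, or involving a non-vertex), which
   keeps their squared distance below D by a fixed margin. *)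

Lemma sqr_convex_sum_le (R : realType) (n : nat) (w a : 'I_n -> R) :
  (forall i, 0 <= w i) -> \sum_i w i = 1 ->
  (\sum_i w i * a i) ^+ 2 <= \sum_i w i * a i ^+ 2.
Proof.
move=> w_ge0 w_sum1; set s := \sum_i w i * a i.
have variance : \sum_i w i * (a i - s) ^+ 2 = \sum_i w i * a i ^+ 2 - s ^+ 2.
  rewrite (eq_bigr (fun i => w i * a i ^+ 2 - 2 * s * (w i * a i) + s ^+ 2 * w i));
    last by move=> i _; ring.
  by rewrite big_split /= sumrB -!mulr_sumr w_sum1 -/s; ring.
rewrite -subr_ge0 -variance; apply: sumr_ge0 => i _.
by rewrite mulr_ge0 ?sqr_ge0.
Qed.

Lemma double_convex_sum_const (R : realType) (n : nat) (w u : 'I_n -> R) (D : R) :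
  \sum_i w i = 1 -> \sum_i u i = 1 -> \sum_k \sum_l w k * u l * D = D.
Proof.
move=> w_sum1 u_sum1.
rewrite (eq_bigr (fun k => w k * D)) => [|k _]; last first.
  by rewrite -[RHS]mulr1 -u_sum1 mulr_sumr; apply: eq_bigr => l _; rewrite mulrAC.
by rewrite -mulr_suml w_sum1 mul1r.
Qed.

Definition indic (R : realType) (P : Prop) : R := (`[< P >] : bool)%:R.

Lemma indicT (R : realType) (P : Prop) : P -> indic R P = 1.
Proof. by move=> p; rewrite /indic asboolT. Qed.

Lemma indicF (R : realType) (P : Prop) : ~ P -> indic R P = 0.
Proof. by move=> p; rewrite /indic asboolF. Qed.

Lemma indic_ge0 (R : realType) (P : Prop) : 0 <= indic R P.
Proof. by rewrite /indic ler0n. Qed.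

Lemma indicN (R : realType) (P : Prop) : indic R (~ P) = 1 - indic R P.
Proof.
case: (pselect P) => p; first by rewrite indicF ?indicT ?subrr.
by rewrite indicT ?indicF ?subr0.
Qed.

Lemma indicI (R : realType) (P Q : Prop) :
  indic R (P /\ Q) = indic R P * indic R Q.
Proof.
case: (pselect P) => p; last by rewrite (indicF R p) mul0r indicF // => -[].
case: (pselect Q) => q; first by rewrite !indicT ?mulr1.
by rewrite (indicF R q) mulr0 indicF // => -[].
Qed.

Lemma le_indic (R : realType) (P Q : Prop) : (P -> Q) -> indic R P <= indic R Q.
Proof.
move=> PQ; case: (pselect P) => p; last by rewrite indicF ?indic_ge0.
by rewrite !indicT //; exact: PQ.
Qed.

Lemma finite_strict_gap (R : realType) (I : finType) (i0 : I) (F : I -> R) (D : R) :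
  exists2 c, c < D & forall i, F i < D -> F i <= c.
Proof.
pose G i := if F i < D then F i else D - 1.
have [imax _ Gmax] := @arg_maxP _ R I i0 xpredT G isT.
exists (G imax); first by rewrite /G; case: ifP => // _; lra.
by move=> i Fi; have := Gmax i isT; rewrite /G Fi.
Qed.

Section SquaredDistance.
Variables (R : realType) (d : nat).
Implicit Types x y z : 'rV[R]_d.

Definition sqdist x y : R := \sum_(c < d) (x ord0 c - y ord0 c) ^+ 2.

Lemma edistE x y : edist x y = Num.sqrt (sqdist x y).
Proof. by []. Qed.

Lemma sqdist_ge0 x y : 0 <= sqdist x y.
Proof. by apply: sumr_ge0 => c _; exact: sqr_ge0. Qed.

Lemma sqdistC x y : sqdist x y = sqdist y x.
Proof. by apply: eq_bigr => c _; rewrite -sqrrN opprB. Qed.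

Lemma sqdist_gt0 x y : x != y -> 0 < sqdist x y.
Proof.
move=> neq_xy; rewrite lt0r sqdist_ge0 andbT; apply: contra neq_xy => /eqP sq0.
have coord0 := psumr_eq0P (fun c _ => sqr_ge0 (x ord0 c - y ord0 c)) sq0.
apply/eqP/matrixP => i j; rewrite (ord1 i); apply/eqP.
by rewrite -subr_eq0 -sqrf_eq0; apply/eqP; exact: coord0.
Qed.

Lemma sqdist_combE y z q t :
  sqdist (t *: y + (1 - t) *: z) q =
  t * sqdist y q + (1 - t) * sqdist z q - t * (1 - t) * sqdist y z.
Proof.
rewrite /sqdist !mulr_sumr -big_split -sumrB /=.
by apply: eq_bigr => c _; rewrite !mxE; ring.
Qed.

Lemma sqdist_convex_le (n : nat) (w : 'I_n -> R) (X : 'I_n -> 'rV[R]_d) z :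
  (forall i, 0 <= w i) -> \sum_i w i = 1 ->
  sqdist (\sum_i w i *: X i) z <= \sum_i w i * sqdist (X i) z.
Proof.
move=> w_ge0 w_sum1.
have coordE c : (\sum_i w i *: X i) ord0 c - z ord0 c
                = \sum_i w i * (X i ord0 c - z ord0 c).
  rewrite summxE -[in LHS](mul1r (z ord0 c)) -w_sum1 mulr_suml -sumrB.
  by apply: eq_bigr => i _; rewrite mxE mulrBr.
rewrite /sqdist; under eq_bigr do rewrite coordE.
under [E in _ <= E]eq_bigr do rewrite mulr_sumr.
by rewrite exchange_big /=; apply: ler_sum => c _; exact: sqr_convex_sum_le.
Qed.

Lemma sqdist_convex2_le (n : nat) (w u : 'I_n -> R) (X : 'I_n -> 'rV[R]_d) :
  (forall i, 0 <= w i) -> \sum_i w i = 1 ->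
  (forall i, 0 <= u i) -> \sum_i u i = 1 ->
  sqdist (\sum_i w i *: X i) (\sum_i u i *: X i)
    <= \sum_k \sum_l w k * u l * sqdist (X k) (X l).
Proof.
move=> w_ge0 w_sum1 u_ge0 u_sum1.
apply: le_trans (sqdist_convex_le _ _ w_ge0 w_sum1) _.
apply: ler_sum => k _; rewrite sqdistC.
under [E in _ <= E]eq_bigr do rewrite -mulrA sqdistC.
by rewrite -mulr_sumr ler_wpM2l //; exact: sqdist_convex_le.
Qed.

End SquaredDistance.

Section ConvexHull.
Variables (R : realType) (d : nat) (X : seq 'rV[R]_d).
Local Notation P := (conv_hull X).

Lemma conv_hull_nth (k : 'I_(size X)) : P X`_k.
Proof.
exists (fun i => (i == k)%:R); split; first by move=> i; exact: ler0n.
split.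
  by rewrite (bigD1 k) //= eqxx big1 ?addr0 // => i /negbTE ->.
rewrite (bigD1 k) //= eqxx scale1r big1 ?addr0 // => i /negbTE ->.
exact: scale0r.
Qed.

Lemma conv_hull_sqdist_le (D : R) p q :
  (forall k l : 'I_(size X), sqdist X`_k X`_l <= D) -> P p -> P q -> sqdist p q <= D.
Proof.
move=> le_D [w [w_ge0 [w_sum1 ->]]] [u [u_ge0 [u_sum1 ->]]].
apply: le_trans (sqdist_convex2_le (fun i => X`_i) w_ge0 w_sum1 u_ge0 u_sum1) _.
rewrite -[X in _ <= X](double_convex_sum_const D w_sum1 u_sum1).
apply: ler_sum => k _; apply: ler_sum => l _.
by rewrite ler_wpM2l ?mulr_ge0.
Qed.

Lemma conv_hull_split (w : 'I_(size X) -> R) (k : 'I_(size X)) :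
  (forall i, 0 <= w i) -> \sum_i w i = 1 -> w k < 1 ->
  exists2 y, P y & \sum_i w i *: X`_i = w k *: X`_k + (1 - w k) *: y.
Proof.
move=> w_ge0 w_sum1 wk_lt1; have rest_gt0 : 0 < 1 - w k by rewrite subr_gt0.
have rest_sum : \sum_(i | i != k) w i = 1 - w k.
  by rewrite -w_sum1 [in RHS](bigD1 k) //= addrAC subrr add0r.
pose w' i := if i == k then 0 else w i / (1 - w k).
exists (\sum_i w' i *: X`_i).
  exists w'; split.
    by move=> i; rewrite /w'; case: eqP => // _; apply: divr_ge0 => //; exact: ltW.
  split => //; rewrite (bigD1 k) //= /w' eqxx add0r.
  rewrite (eq_bigr (fun i => w i / (1 - w k))); last by move=> i /negbTE ->.
  by rewrite -mulr_suml rest_sum divff ?lt0r_neq0.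
rewrite (bigD1 k) //= scaler_sumr [in RHS](bigD1 k) //= /w' eqxx scale0r scaler0 add0r.
congr (_ + _); apply: eq_bigr => i /negbTE ->.
by rewrite scalerA mulrCA divff ?mulr1 ?lt0r_neq0.
Qed.

Lemma vertex_conv_hull_nth v : vertices P v -> exists k : 'I_(size X), v = X`_k.
Proof.
move=> [[w [w_ge0 [w_sum1 ->]]] not_interior].
have [k wk_gt0] : exists k, 0 < w k.
  apply/not_existsP => all_le0; move: w_sum1; rewrite big1 => [/eqP|i _].
    by rewrite eq_sym oner_eq0.
  by apply/eqP; rewrite eq_le w_ge0 andbT leNgt; apply/negP/all_le0.
exists k; have : w k <= 1 by rewrite -w_sum1 (bigD1 k) //= lerDl sumr_ge0.
rewrite le_eqVlt => /orP[/eqP wk1 | wk_lt1].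
  have rest0 : \sum_(i | i != k) w i = 0.
    by move: w_sum1; rewrite (bigD1 k) //= wk1; lra.
  rewrite (bigD1 k) //= wk1 scale1r big1 ?addr0 // => i neq_ik.
  by rewrite (psumr_eq0P (fun i _ => w_ge0 i) rest0 neq_ik) scale0r.
have [y Py split_w] := conv_hull_split w_ge0 w_sum1 wk_lt1.
have [eq_ky | neq_ky] := eqVneq X`_k y.
  by rewrite split_w -eq_ky -scalerDl addrC subrK scale1r.
exfalso; apply: not_interior; exists X`_k, y, (w k).
by rewrite wk_gt0 wk_lt1; split => //; exact: conv_hull_nth.
Qed.

Lemma vertex_of_max_sqdist (D : R) (k l : 'I_(size X)) :
  (forall k l : 'I_(size X), sqdist X`_k X`_l <= D) ->
  sqdist X`_k X`_l = D -> vertices P X`_k.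
Proof.
move=> le_D eq_D; split; first exact: conv_hull_nth.
move=> [y [z [t [Py Pz neq_yz /andP[t_gt0 t_lt1] split_k]]]].
have := sqdist_combE y z X`_l t; rewrite -split_k eq_D.
have := conv_hull_sqdist_le le_D Py (conv_hull_nth l).
have := conv_hull_sqdist_le le_D Pz (conv_hull_nth l).
have : 0 < t * (1 - t) * sqdist y z by rewrite !mulr_gt0 ?subr_gt0 ?sqdist_gt0.
nra.
Qed.

Lemma exists_max_sqdist : X != [::] ->
  exists k l : 'I_(size X), forall k' l' : 'I_(size X),
    sqdist X`_k' X`_l' <= sqdist X`_k X`_l.
Proof.
rewrite -size_eq0 -lt0n => X_gt0; pose i0 := Ordinal X_gt0.
pose F (p : 'I_(size X) * 'I_(size X)) := sqdist X`_p.1 X`_p.2.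
have [[k l] _ Fmax] := @arg_maxP _ R _ (i0, i0) xpredT F isT.
by exists k, l => k' l'; exact: (Fmax (k', l')).
Qed.

End ConvexHull.

Section Diameter.
Variables (R : realType) (d : nat).
Implicit Types S T : set 'rV[R]_d.

Lemma diam_le S (b : R) :
  S !=set0 -> (forall p q, S p -> S q -> edist p q <= b) -> diam S <= b.
Proof.
move=> [x Sx] le_b; apply: ge_sup; first by exists (edist x x), (x, x).
by move=> r [[p q] [/= Sp Sq] <-]; exact: le_b.
Qed.

Lemma le_diam S (b : R) p q :
  (forall p q, S p -> S q -> edist p q <= b) -> S p -> S q -> edist p q <= diam S.
Proof.
move=> le_b Sp Sq; apply: ub_le_sup; last by exists (p, q).
by exists b => r [[x y] [/= Sx Sy] <-]; exact: le_b.
Qed.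

Lemma le_diam_subset S T (b : R) :
  (forall p q, T p -> T q -> edist p q <= b) ->
  S `<=` T -> S !=set0 -> diam S <= diam T.
Proof.
move=> le_b sub_ST S_n0; apply: diam_le => // p q Sp Sq.
exact: (le_diam le_b (sub_ST p Sp) (sub_ST q Sq)).
Qed.

Lemma partition_drop_empty (S : set 'rV[R]_d) (m : nat) (A : 'I_m -> set 'rV[R]_d) :
  (forall i j, i != j -> A i `&` A j = set0) -> \bigcup_(i in [set: 'I_m]) A i = S ->
  exists2 k, (k <= m)%N &
    exists B : 'I_k -> set 'rV[R]_d, is_partition S B /\ forall j, exists i, B j = A i.
Proof.
move=> A_disj A_cover; pose s := [seq i <- enum 'I_m | `[< A i !=set0 >]].
have s_inj : injective (tnth (in_tuple s)).
  by apply/tuple_uniqP; rewrite filter_uniq // enum_uniq.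
have s_n0 j : A (tnth (in_tuple s) j) !=set0.
  by have := mem_tnth j (in_tuple s); rewrite mem_filter => /andP[/asboolP].
exists (size s).
  by rewrite -[X in (_ <= X)%N](size_enum_ord m) size_filter count_size.
exists (fun j => A (tnth (in_tuple s) j)); split; last first.
  by move=> j; exists (tnth (in_tuple s) j).
split; [exact: s_n0 | split].
  move=> j j' neq_jj'; apply: A_disj; apply: contra neq_jj'.
  by move=> /eqP /s_inj ->.
rewrite -A_cover; apply/seteqP; split=> x.
  by move=> [j _ Ax]; exists (tnth (in_tuple s) j).
move=> [i _ Ax]; have : i \in s.
  by rewrite mem_filter mem_enum andbT; apply/asboolP; exists x.
by move=> /seq_tnthP[j eq_i]; exists j => //; rewrite -eq_i.
Qed.

Lemma borsuk_partitionable_subset (S T : set 'rV[R]_d) (b : R) (m : nat) :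
  (forall p q, T p -> T q -> edist p q <= b) -> S `<=` T -> diam S = diam T ->
  borsuk_partitionable T m -> exists2 k, (k <= m)%N & borsuk_partitionable S k.
Proof.
move=> le_b sub_ST diam_ST [A [[_ [A_disj A_cover]] diam_A]].
have AS_disj i j : i != j -> (A i `&` S) `&` (A j `&` S) = set0.
  by move=> /A_disj AA; apply/seteqP; split=> x // [[Ax _] [Ax' _]]; rewrite -AA.
have AS_cover : \bigcup_(i in [set: 'I_m]) (A i `&` S) = S.
  apply/seteqP; split=> x; first by move=> [i _ []].
  by move=> Sx; have := sub_ST x Sx; rewrite -A_cover => -[i _ Ax]; exists i.
have [k le_km [B [B_part B_A]]] := partition_drop_empty AS_disj AS_cover.
exists k => //; exists B; split => // j; have [i Bj] := B_A j.
rewrite diam_ST; apply: le_lt_trans (diam_A i); rewrite Bj.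
have A_sub i' : A i' `<=` T by move=> x Ax; rewrite -A_cover; exists i'.
apply: le_diam_subset (fun p q Ap Aq => le_b p q (A_sub i p Ap) (A_sub i q Aq)) _ _.
  by move=> x [].
by rewrite -Bj; case: B_part.
Qed.

End Diameter.

Section MaximalSquaredDistance.
Variables (R : realType) (d : nat) (X : seq 'rV[R]_d) (k1 l1 : 'I_(size X)).
Hypothesis sqdist_le_max :
  forall k l : 'I_(size X), sqdist X`_k X`_l <= sqdist X`_k1 X`_l1.
Local Notation D := (sqdist X`_k1 X`_l1).
Local Notation P := (conv_hull X).
Local Notation V := (vertices (conv_hull X)).

Lemma conv_hull_edist_le p q : P p -> P q -> edist p q <= Num.sqrt D.
Proof.
by move=> Pp Pq; rewrite edistE ler_sqrt ?sqdist_ge0 ?(conv_hull_sqdist_le _ Pp Pq).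
Qed.

Lemma far_pair_vertices (k l : 'I_(size X)) :
  ~ sqdist X`_k X`_l < D -> V X`_k /\ V X`_l.
Proof.
move=> /negP; rewrite -leNgt => ge_D.
have eq_D : sqdist X`_k X`_l = D by apply/le_anti; rewrite ge_D sqdist_le_max.
split; first exact: vertex_of_max_sqdist eq_D.
by apply: (vertex_of_max_sqdist (l := k) sqdist_le_max); rewrite sqdistC.
Qed.

Lemma vertices_max_pair : V X`_k1 /\ V X`_l1.
Proof. by apply: far_pair_vertices; rewrite ltxx. Qed.

Lemma diam_conv_hull : diam P = Num.sqrt D.
Proof.
apply/le_anti/andP; split.
  by apply: diam_le; [exists X`_k1; exact: conv_hull_nth | exact: conv_hull_edist_le].
by rewrite -edistE; apply: le_diam conv_hull_edist_le _ _; exact: conv_hull_nth.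
Qed.

Lemma diam_vertices_conv_hull : diam V = Num.sqrt D.
Proof.
have [Vk1 Vl1] := vertices_max_pair.
have le_sqrtD p q : V p -> V q -> edist p q <= Num.sqrt D.
  by move=> [Pp _] [Pq _]; exact: conv_hull_edist_le.
apply/le_anti/andP; split; first by apply: diam_le; [exists X`_k1 | ].
by rewrite -edistE; exact: le_diam le_sqrtD Vk1 Vl1.
Qed.

Definition close_mass (w u : 'I_(size X) -> R) : R :=
  \sum_k \sum_l w k * u l * indic R (sqdist X`_k X`_l < D).

Lemma sqdist_le_close_mass (c : R) (w u : 'I_(size X) -> R) :
  (forall k l : 'I_(size X), sqdist X`_k X`_l < D -> sqdist X`_k X`_l <= c) ->
  (forall k, 0 <= w k) -> \sum_k w k = 1 -> (forall l, 0 <= u l) -> \sum_l u l = 1 ->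
  sqdist (\sum_k w k *: X`_k) (\sum_l u l *: X`_l) <= D - (D - c) * close_mass w u.
Proof.
move=> short_le_c w_ge0 w_sum1 u_ge0 u_sum1.
apply: le_trans (sqdist_convex2_le (fun i => X`_i) w_ge0 w_sum1 u_ge0 u_sum1) _.
rewrite -[X in X - _](double_convex_sum_const D w_sum1 u_sum1).
rewrite /close_mass mulr_sumr -sumrB.
apply: ler_sum => k _; rewrite mulr_sumr -sumrB; apply: ler_sum => l _.
rewrite mulrCA -mulrBr ler_wpM2l ?mulr_ge0 //.
case: (pselect (sqdist X`_k X`_l < D)) => [short | long].
  by rewrite indicT // mulr1 opprB addrC subrK short_le_c.
by rewrite indicF // mulr0 subr0 sqdist_le_max.
Qed.

Lemma le_close_mass (Q : 'I_(size X) -> 'I_(size X) -> Prop) (w u : 'I_(size X) -> R) :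
  (forall k, 0 <= w k) -> (forall l, 0 <= u l) ->
  (forall k l, Q k l -> sqdist X`_k X`_l < D) ->
  \sum_k \sum_l w k * u l * indic R (Q k l) <= close_mass w u.
Proof.
move=> w_ge0 u_ge0 Q_short; apply: ler_sum => k _; apply: ler_sum => l _.
by rewrite ler_wpM2l ?mulr_ge0 ?le_indic //; exact: Q_short.
Qed.

Section VertexPartition.
Variables (m : nat) (B : 'I_m -> set 'rV[R]_d).
Hypothesis B_partition : is_partition V B.
Hypothesis diam_B : forall i, diam (B i) < diam V.

Lemma block_sub_vertices i : B i `<=` V.
Proof. by case: B_partition => _ [_ <-] x Bx; exists i. Qed.

Lemma vertex_in_block x : V x -> exists i, B i x.
Proof. by case: B_partition => _ [_ <-] [i _ Bx]; exists i. Qed.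

Lemma block_uniq i j x : B i x -> B j x -> i = j.
Proof.
case: B_partition => _ [B_disj _] Bi Bj; apply/eqP; apply: contraT => /B_disj.
by move/seteqP => [+ _] => /(_ x (conj Bi Bj)).
Qed.

Lemma block_sqdist_lt i p q : B i p -> B i q -> sqdist p q < D.
Proof.
move=> Bp Bq; have le_sqrtD x y : B i x -> B i y -> edist x y <= Num.sqrt D.
  by move=> /block_sub_vertices[Px _]
    /block_sub_vertices[Py _]; exact: conv_hull_edist_le.
have lt_pq : edist p q < Num.sqrt D.
  rewrite -diam_vertices_conv_hull.
  exact: le_lt_trans (le_diam le_sqrtD Bp Bq) (diam_B i).
have D_gt0 : 0 < D by rewrite -sqrtr_gt0; exact: le_lt_trans (sqrtr_ge0 _) lt_pq.
by rewrite -ltr_sqrt.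
Qed.

Definition block_mass (i : 'I_m) (w : 'I_(size X) -> R) : R :=
  \sum_(k < size X) indic R (B i X`_k) * w k.

Definition nonvertex_mass (w : 'I_(size X) -> R) : R :=
  \sum_(k < size X) indic R (~ V X`_k) * w k.

Definition heavy_in_block (x : 'rV[R]_d) (i : 'I_m) : Prop :=
  exists w : 'I_(size X) -> R, [/\ forall k, 0 <= w k, \sum_k w k = 1,
    x = \sum_(k < size X) w k *: X`_k & 1 - nonvertex_mass w <= block_mass i w * m%:R].

Lemma num_blocks_gt0 : (0 < m)%N.
Proof.
have [[i lt_im] _] := vertex_in_block vertices_max_pair.1.
exact: leq_ltn_trans lt_im.
Qed.

Lemma block_scale_gt0 : 0 < 4 * m%:R ^+ 2 :> R.
Proof. by rewrite mulr_gt0 // exprn_gt0 // ltr0n num_blocks_gt0. Qed.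

Lemma sum_indic_block (k : 'I_(size X)) : \sum_i indic R (B i X`_k) = indic R (V X`_k).
Proof.
case: (pselect (V X`_k)) => [Vk | nVk]; last first.
  by rewrite indicF // big1 // => i _; rewrite indicF // => /block_sub_vertices.
have [i Bi] := vertex_in_block Vk.
rewrite indicT // (bigD1 i) //= indicT // big1 ?addr0 // => j neq_ji.
by rewrite indicF // => Bj; move: neq_ji; rewrite (block_uniq Bj Bi) eqxx.
Qed.

Lemma sum_block_mass w : \sum_i block_mass i w = \sum_k w k - nonvertex_mass w.
Proof.
rewrite /block_mass exchange_big /= /nonvertex_mass -sumrB; apply: eq_bigr => k _.
by rewrite -mulr_suml sum_indic_block indicN mulrBl mul1r opprB addrC subrK.
Qed.

Lemma block_heavy i x : B i x -> heavy_in_block x i.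
Proof.
move=> Bx; have Vx := block_sub_vertices Bx; have [k xE] := vertex_conv_hull_nth Vx.
have delta_sum (F : 'I_(size X) -> R) : \sum_j F j * (j == k)%:R = F k.
  by rewrite (bigD1 k) //= eqxx mulr1 big1 ?addr0 // => j /negbTE ->; rewrite mulr0.
exists (fun j => (j == k)%:R); split.
- by move=> j; exact: ler0n.
- by rewrite -[RHS](delta_sum (fun=> 1)); apply: eq_bigr => j _; rewrite mul1r.
- rewrite xE (bigD1 k) //= eqxx scale1r big1 ?addr0 // => j /negbTE ->.
  exact: scale0r.
- rewrite /nonvertex_mass /block_mass !delta_sum -xE indicF ?indicT // subr0 mul1r.
  by rewrite ler1n num_blocks_gt0.
Qed.

Lemma exists_heavy_block x : P x -> exists i, heavy_in_block x i.
Proof.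
move=> [w [w_ge0 [w_sum1 xE]]]; have [i0 _] := vertex_in_block vertices_max_pair.1.
have [imax _ maxP] := @arg_maxP _ R _ i0 xpredT (block_mass^~ w) isT.
exists imax, w; split => //; have := sum_block_mass w; rewrite w_sum1 => <-.
apply: (@le_trans _ _ (\sum_(i < m) block_mass imax w)).
  by apply: ler_sum => i _; exact: maxP.
by rewrite sumr_const card_ord mulr_natr.
Qed.

Lemma close_mass_lb i w u :
  (forall k, 0 <= w k) -> \sum_k w k = 1 -> (forall l, 0 <= u l) -> \sum_l u l = 1 ->
  1 - nonvertex_mass w <= block_mass i w * m%:R ->
  1 - nonvertex_mass u <= block_mass i u * m%:R ->
  1 <= close_mass w u * (4 * m%:R ^+ 2).
Proof.
move=> w_ge0 w_sum1 u_ge0 u_sum1 heavy_w heavy_u.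
have nonvertex_short (k l : 'I_(size X)) : ~ V X`_k \/ ~ V X`_l -> sqdist X`_k X`_l < D.
  move=> nV; case: (pselect (sqdist X`_k X`_l < D)) => // long.
  by have [Vk Vl] := far_pair_vertices long; case: nV.
have mass_ge0 (Q : 'I_(size X) -> Prop) (v : 'I_(size X) -> R) :
    (forall k, 0 <= v k) -> 0 <= \sum_k indic R (Q k) * v k.
  by move=> v_ge0; apply: sumr_ge0 => k _; rewrite mulr_ge0 ?indic_ge0.
have nonvertex_w : nonvertex_mass w <= close_mass w u.
  have -> : nonvertex_mass w = \sum_k \sum_l w k * u l * indic R (~ V X`_k).
    apply: eq_bigr => k _; rewrite -[LHS]mulr1 -u_sum1 mulr_sumr.
    by apply: eq_bigr => l _; ring.
  by apply: le_close_mass => // k l nVk; apply: nonvertex_short; left.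
have nonvertex_u : nonvertex_mass u <= close_mass w u.
  have -> : nonvertex_mass u = \sum_k \sum_l w k * u l * indic R (~ V X`_l).
    rewrite exchange_big /=; apply: eq_bigr => l _.
    by rewrite -[LHS]mulr1 -w_sum1 mulr_sumr; apply: eq_bigr => k _; ring.
  by apply: le_close_mass => // k l nVl; apply: nonvertex_short; right.
have same_block : block_mass i w * block_mass i u <= close_mass w u.
  have -> : block_mass i w * block_mass i u
            = \sum_k \sum_l w k * u l * indic R (B i X`_k /\ B i X`_l).
    rewrite mulr_suml; apply: eq_bigr => k _.
    by rewrite mulr_sumr; apply: eq_bigr => l _; rewrite indicI; ring.
  by apply: le_close_mass => // k l [Bk Bl]; exact: block_sqdist_lt Bk Bl.
have M1 : 1 <= m%:R :> R by rewrite ler1n num_blocks_gt0.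
have nw_ge0 : 0 <= nonvertex_mass w := mass_ge0 _ _ w_ge0.
have nu_ge0 : 0 <= nonvertex_mass u := mass_ge0 _ _ u_ge0.
have aw_ge0 : 0 <= block_mass i w := mass_ge0 _ _ w_ge0.
have au_ge0 : 0 <= block_mass i u := mass_ge0 _ _ u_ge0.
have M2 : 1 <= m%:R ^+ 2 :> R by rewrite expr_ge1.
case: (lerP (1 / 2) (nonvertex_mass w)) => [|nw_small]; first nra.
case: (lerP (1 / 2) (nonvertex_mass u)) => [|nu_small]; first nra.
have : 1 / 4 <= (block_mass i w * m%:R) * (block_mass i u * m%:R) by nra.
nra.
Qed.

Lemma heavy_sqdist_le (c : R) i x y :
  c < D ->
  (forall k l : 'I_(size X), sqdist X`_k X`_l < D -> sqdist X`_k X`_l <= c) ->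
  heavy_in_block x i -> heavy_in_block y i ->
  sqdist x y <= D - (D - c) / (4 * m%:R ^+ 2).
Proof.
move=> c_lt_D short_le_c [w [w_ge0 w_sum1 -> heavy_w]] [u [u_ge0 u_sum1 -> heavy_u]].
apply: le_trans (sqdist_le_close_mass short_le_c w_ge0 w_sum1 u_ge0 u_sum1) _.
rewrite lerD2l lerN2 ler_pM2l ?subr_gt0 // -[_^-1]div1r ler_pdivrMr ?block_scale_gt0 //.
exact: close_mass_lb heavy_w heavy_u.
Qed.

Lemma borsuk_partitionable_conv_hull : borsuk_partitionable P m.
Proof.
have [B_n0 [B_disj _]] := B_partition.
have [i0 _] := vertex_in_block vertices_max_pair.1.
have [c c_lt_D short_le_c] :=
  finite_strict_gap (k1, k1) (fun kl => sqdist X`_kl.1 X`_kl.2) D.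
set r := D - (D - c) / (4 * m%:R ^+ 2).
have heavy_le_r i x y : heavy_in_block x i -> heavy_in_block y i -> sqdist x y <= r.
  move=> hx hy; apply: heavy_sqdist_le hx hy => // k l.
  exact: (short_le_c (k, l)).
have r_lt_D : r < D.
  have : 0 < (D - c) / (4 * m%:R ^+ 2) by rewrite divr_gt0 ?subr_gt0 ?block_scale_gt0.
  rewrite /r; lra.
have [f f_heavy] : {f : 'rV[R]_d -> 'I_m & forall x, P x -> heavy_in_block x (f x)}.
  apply: (@choice _ _ (fun x i => P x -> heavy_in_block x i)) => x.
  case: (pselect (P x)) => [/exists_heavy_block[i hi] | nPx]; first by exists i.
  by exists i0 => /nPx.
pose A i := B i `|` [set x | P x /\ ~ V x /\ f x = i].
have A_heavy i x : A i x -> heavy_in_block x i.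
  by move=> [/block_heavy // | [Px [_ <-]]]; exact: f_heavy.
exists A; split; first split; [|split|].
- by move=> i; have [x Bx] := B_n0 i; exists x; left.
- move=> i j neq_ij; apply/seteqP; split => x // [Ai Aj]; move: neq_ij.
  case: Ai => [Bi | [_ [nVx <-]]]; case: Aj => [Bj | [_ [nVx' <-]]].
  + by rewrite (block_uniq Bi Bj) eqxx.
  + by have [] := nVx' (block_sub_vertices Bi).
  + by have [] := nVx (block_sub_vertices Bj).
  + by rewrite eqxx.
- apply/seteqP; split => x; first by move=> [i _ [/block_sub_vertices[] | []]].
  move=> Px; case: (pselect (V x)) => [/vertex_in_block[i Bx] | nVx].
    by exists i => //; left.
  by exists (f x) => //; right.
- move=> i; rewrite diam_conv_hull; have [x0 Bx0] := B_n0 i.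
  have r_ge0 : 0 <= r.
    have heavy_x0 := block_heavy Bx0.
    exact: le_trans (sqdist_ge0 x0 x0) (heavy_le_r _ _ _ heavy_x0 heavy_x0).
  apply: (@le_lt_trans _ _ (Num.sqrt r)); last by rewrite ltr_sqrt ?(le_lt_trans r_ge0).
  apply: diam_le; first by exists x0; left.
  move=> p q Ap Aq; rewrite edistE ler_sqrt //.
  exact: heavy_le_r (A_heavy _ _ Ap) (A_heavy _ _ Aq).
Qed.

End VertexPartition.

End MaximalSquaredDistance.

Lemma borsuk_number_eq (R : realType) (d : nat) (S T : set 'rV[R]_d) :
  (forall m, borsuk_partitionable S m ->
     exists2 k, (k <= m)%N & borsuk_partitionable T k) ->
  (forall m, borsuk_partitionable T m -> borsuk_partitionable S m) ->
  borsuk_number S = borsuk_number T.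
Proof.
move=> S_T T_S; rewrite /borsuk_number.
case: pselect => [hS | nS]; case: pselect => [hT | nT].
- congr Some; apply/eqP; rewrite eqn_leq.
  case: ex_minnP => mS /asboolP mS_part mS_min.
  case: ex_minnP => mT /asboolP mT_part mT_min.
  rewrite mS_min ?(asboolT (T_S _ mT_part)) //=.
  have [k le_km k_part] := S_T _ mS_part.
  by rewrite (leq_trans (mT_min _ (asboolT k_part))).
- by have [m /asboolP /S_T[k _ k_part]] := hS; case: nT; exists k; exact: asboolT.
- by have [m /asboolP /T_S m_part] := hT; case: nS; exists m; exact: asboolT.
- by [].
Qed.

Theorem proposition2p1 (R : realType) (d : nat) (P : set 'rV[R]_d) :
  polytope P -> borsuk_number P = borsuk_number (vertices P).
Proof.
move=> [X [X_n0 ->]]; have [k1 [l1 sqdist_le_max]] := exists_max_sqdist X_n0.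
have VP : vertices (conv_hull X) `<=` conv_hull X by move=> x [].
apply: borsuk_number_eq => m.
  apply: borsuk_partitionable_subset (conv_hull_edist_le sqdist_le_max) VP _.
  by rewrite (diam_conv_hull sqdist_le_max) (diam_vertices_conv_hull sqdist_le_max).
by move=> [B [B_part diam_B]]; exact: borsuk_partitionable_conv_hull diam_B.
Qed.
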